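(* Let $k\ge 2$ and $C_{8k}=v_0v_1\cdots v_{8k-1}v_0$. Let $\mathscr A=\{\{v_{2i},v_{4k+2i}\}: 0\le i\le 2k-1\}$ and $\mathscr B=\{\{v_{2j+1},v_{2k+2j+1}\}: j\in[0,k-1]\cup[2k,3k-1]\}$. Let $G_{4k}(\mathscr A,\mathscr B)$ be the graph obtained from $C_{8k}$ by identifying the two vertices of each block of $\mathscr A\cup\mathscr B$ into a single vertex. Then $G_{4k}(\mathscr A,\mathscr B)\cong C_{4k}(1,2k-1)$.
   Context: Identifying a set of pairwise nonadjacent vertices means replacing them by one new vertex incident to all edges previously incident to any of them. For an integer $n\ge 3$ and integers $s_1,\dots,s_k$, the circulant graph $C_n(s_1,\dots,s_k)$ has vertex set $\mathbb Z_n$, with distinct $u,v$ adjacent iff $u-v\equiv\pm s_i\pmod n$ for some $i$. $[a,b]$ denotes the set of integers from $a$ to $b$. *)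

From mathcomp Require Import all_boot.
Set Implicit Arguments. Unset Strict Implicit. Unset Printing Implicit Defensive.

Definition circ_adj (n : nat) (S : seq nat) (u v : 'I_n) : bool :=
  (u != v) &&
  has (fun s => (v + s == u %[mod n]) || (u + s == v %[mod n])) S.
Arguments circ_adj : clear implicits.

(* The cycle C_n = v_0 v_1 ... v_{n-1} v_0 with v_i = i, i.e. C_n(1). *)
Definition cycle_adj (n : nat) : rel 'I_n := circ_adj n [:: 1].
Arguments cycle_adj : clear implicits.

(* Identification of the vertices of each block of a family P of pairwise
   disjoint (nonadjacent) vertex sets: the vertices of the new graph are the
   blocks of P together with singletons of the vertices not covered by P. *)
Definition ident_vertices (T : finType) (P : {set {set T}}) : {set {set T}} :=
  P :|: [set [set x] | x in ~: cover P].

Definition ident_adj (T : finType) (adj : rel T) (X Y : {set T}) : bool :=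
  (X != Y) && [exists u, exists v, [&& u \in X, v \in Y & adj u v]].

Definition ident_class (T : finType) (P : {set {set T}}) (x : T) : {set T} :=
  pblock (ident_vertices P) x.

Definition iso_onto (T U : finType) (V : {set {set T}})
    (adjV : rel {set T}) (adjU : rel U) : Prop :=
  exists f : {set T} -> U,
    [/\ {in V &, injective f},
        (forall y : U, exists2 X, X \in V & f X = y) &
        {in V &, forall X Y, adjV X Y = adjU (f X) (f Y)}].

(* The blocks of the statement, with v_m identified with m in 'I_(8k). *)
Definition blocksA (k : nat) : {set {set 'I_(8 * k)}} :=
  [set X : {set 'I_(8 * k)} | [exists i : 'I_(2 * k),
     X == [set v : 'I_(8 * k) | (val v == 2 * i) || (val v == 4 * k + 2 * i)]]].

Definition blocksB (k : nat) : {set {set 'I_(8 * k)}} :=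
  [set X : {set 'I_(8 * k)} | [exists j : 'I_(3 * k), (( j < k) || (2 * k <= j)) &&
     (X == [set v : 'I_(8 * k) | (val v == 2 * j + 1) || (val v == 2 * k + 2 * j + 1)])]].

From mathcomp Require Import all_boot zify.

Set Implicit Arguments.
Unset Strict Implicit.
Unset Printing Implicit Defensive.

(* Let [collapse] : Z_(8k) -> Z_(4k) send an even vertex v to v mod 4k, an odd
   vertex of [0, 2k) to itself, an odd vertex of [2k, 6k) to v - 2k and an odd
   vertex of [6k, 8k) to v - 4k; its fibres are exactly the blocks of A ∪ B.
   Walking once along the 8k-cycle moves the image by +1 outside [2k, 6k) and
   by 2k + 1 = -(2k - 1) (mod 4k) inside it, so cycle edges go to edges of
   C_(4k)(1, 2k-1).  Every vertex of Z_(4k) has a preimage on both sides of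
   this split, so every edge of C_(4k)(1, 2k-1) lifts.  Finally the fibre of
   an even vertex v is {v, v + 4k} and that of an odd one is {v, v + 2k}, so
   for k >= 2 no two cycle edges have the same image. *)

Lemma circ_adj_sym n S : symmetric (circ_adj n S).
Proof.
move=> a b; rewrite /circ_adj eq_sym; congr (_ && _).
by apply: eq_has => s; rewrite orbC.
Qed.

Lemma circ_adj_shift n S (a b : 'I_n) s : s \in S -> ~~ (n %| s) ->
  b = (a + s) %% n :> nat -> circ_adj n S a b.
Proof.
move=> S_s ndvd_s b_as; apply/andP; split.
  apply: contra ndvd_s => /eqP a_b.
  have : a + s == a + 0 %[mod n] by rewrite addn0 -b_as a_b modn_small.
  by rewrite eqn_modDl mod0n.
by apply/hasP; exists s => //; rewrite b_as modn_mod eqxx orbT.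
Qed.

Lemma circ_adjP n S (a b : 'I_n) : circ_adj n S a b ->
  exists2 s, s \in S & b = (a + s) %% n :> nat \/ a = (b + s) %% n :> nat.
Proof.
case/andP=> _ /hasP [s S_s adj_s]; exists s => //.
by case/orP: adj_s => /eqP; rewrite !(modn_small (ltn_ord _)) => <-; [right | left].
Qed.

Lemma modn_shift_inv n (a b : 'I_n) s : s <= n ->
  b = (a + s) %% n :> nat -> a = (b + (n - s)) %% n :> nat.
Proof.
by move=> le_s_n ->; rewrite modnDml -addnA subnKC // modnDr modn_small.
Qed.

Lemma cycle_adj_ordS n (u : 'I_n) : 1 < n -> cycle_adj n u (ordS u).
Proof.
move=> lt1n; apply: (circ_adj_shift (s := 1)); first by rewrite inE.
  by rewrite dvdn1 gtn_eqF.
by rewrite /= addn1.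
Qed.

Lemma cycle_adjP n (u v : 'I_n) : cycle_adj n u v -> v = ordS u \/ u = ordS v.
Proof.
case/circ_adjP=> s; rewrite inE => /eqP -> []; rewrite addn1 => succ;
  [left | right]; exact: val_inj.
Qed.

Lemma cycle_adj_cases n (u v : 'I_n) : cycle_adj n u v ->
  v = u.+1 :> nat \/ u = v.+1 :> nat \/ u.+1 = n /\ v = 0 :> nat \/ v.+1 = n /\ u = 0 :> nat.
Proof.
have ordS_val (x : 'I_n) : ordS x = (if x.+1 == n then 0 else x.+1) :> nat.
  rewrite /=; case: eqP => [-> | ne_n]; first exact: modnn.
  by rewrite modn_small //; have := ltn_ord x; lia.
by case/cycle_adjP=> ->; rewrite ordS_val; case: eqP; lia.
Qed.

Section QuotientByFibres.

Variables (T U : finType) (h : T -> U).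

Let P := preim_partition h [set: T].

Lemma ident_vertices_preim_partition : ident_vertices P = P.
Proof.
by rewrite /ident_vertices (cover_partition (preim_partitionP h _)) setCT imset0 setU0.
Qed.

Lemma mem_ident_class_preim x y : (y \in ident_class P x) = (h x == h y).
Proof.
rewrite /ident_class ident_vertices_preim_partition pblock_equivalence_partition //.
by move=> a b c _ _ _; split=> // /eqP ->.
Qed.

Lemma ident_class_preim_eq x y : (ident_class P x == ident_class P y) = (h x == h y).
Proof.
apply/eqP/eqP => [eq_cl | eq_h].
  by apply/eqP; rewrite -mem_ident_class_preim eq_cl mem_ident_class_preim.
by apply/setP => z; rewrite !mem_ident_class_preim eq_h.
Qed.

Lemma ident_vertices_preim_class X :
  X \in ident_vertices P -> exists x, X = ident_class P x.
Proof.
rewrite ident_vertices_preim_partition => PX.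
have /and3P [_ trivP set0_notin] := preim_partitionP h [set: T].
have [x Xx] : exists x, x \in X.
  by apply/set0Pn; apply: contraNneq set0_notin => <-.
by exists x; rewrite /ident_class ident_vertices_preim_partition (def_pblock trivP PX Xx).
Qed.

Lemma ident_class_preim_mem x : ident_class P x \in ident_vertices P.
Proof.
rewrite /ident_class ident_vertices_preim_partition pblock_mem //.
by rewrite (cover_partition (preim_partitionP h _)) inE.
Qed.

Variables (adj : rel T) (adjU : rel U).
Hypothesis adjU_irr : irreflexive adjU.
Hypothesis adj_image : forall u v, adj u v -> adjU (h u) (h v).

Lemma preim_partition_independent X : X \in P ->
  forall u v, u \in X -> v \in X -> ~~ adj u v.
Proof.
rewrite -ident_vertices_preim_partition => /ident_vertices_preim_class [x ->] u v.
rewrite !mem_ident_class_preim => /eqP hu /eqP hv.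
by apply/negP => /adj_image; rewrite -hu -hv adjU_irr.
Qed.

Hypothesis h_surj : forall a, exists x, h x = a.
Hypothesis adjU_lift : forall a b, adjU a b -> exists u v, [/\ h u = a, h v = b & adj u v].

Lemma iso_onto_preim_partition (x0 : T) :
  iso_onto (ident_vertices P) (ident_adj adj) adjU.
Proof.
pose f (X : {set T}) := h (odflt x0 [pick x in X]).
have f_class x : f (ident_class P x) = h x.
  rewrite /f; case: pickP => [y | /(_ x)]; last by rewrite mem_ident_class_preim eqxx.
  by rewrite mem_ident_class_preim => /eqP.
exists f; split.
- move=> _ _ /ident_vertices_preim_class [x ->] /ident_vertices_preim_class [y ->].
  by rewrite !f_class => eq_h; apply/eqP; rewrite ident_class_preim_eq eq_h.
- move=> a; have [x <-] := h_surj a.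
  by exists (ident_class P x); rewrite ?f_class ?ident_class_preim_mem.
move=> _ _ /ident_vertices_preim_class [x ->] /ident_vertices_preim_class [y ->].
rewrite !f_class /ident_adj ident_class_preim_eq; apply/idP/idP.
  case/andP=> _ /existsP [u /existsP [v /and3P [xu yv adj_uv]]].
  move: xu yv; rewrite !mem_ident_class_preim => /eqP -> /eqP ->.
  exact: adj_image.
move=> adjU_xy; apply/andP; split.
  by apply: contraTneq adjU_xy => ->; rewrite adjU_irr.
have [u [v [hu hv adj_uv]]] := adjU_lift adjU_xy.
apply/existsP; exists u; apply/existsP; exists v.
by rewrite !mem_ident_class_preim hu hv !eqxx.
Qed.

End QuotientByFibres.

Section Collapse.

Variable k : nat.

Definition collapse (v : nat) : nat :=
  if ~~ odd v then (if v < 4 * k then v else v - 4 * k)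
  else if v < 2 * k then v else if v < 6 * k then v - 2 * k else v - 4 * k.

Lemma collapse_lt v : v < 8 * k -> collapse v < 4 * k.
Proof. by rewrite /collapse; repeat case: ifP; lia. Qed.

Definition collapse_ord (v : 'I_(8 * k)) : 'I_(4 * k) := Ordinal (collapse_lt (ltn_ord v)).

Hypothesis k_ge2 : 2 <= k.

Definition collapse_step (u : nat) : nat := if 2 * k <= u < 6 * k then (2 * k).+1 else 1.

Lemma collapse_succ u : u < 8 * k ->
  collapse (u.+1 %% (8 * k)) = (collapse u + collapse_step u) %% (4 * k).
Proof.
move=> lt_u; have [lt_u1 | eq_u1] : u.+1 < 8 * k \/ u.+1 = 8 * k by lia.
  rewrite (modn_small lt_u1).
  have [lt | ge] := ltnP (collapse u + collapse_step u) (4 * k).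
    by rewrite (modn_small lt); move: lt; rewrite /collapse /collapse_step; repeat case: ifP; lia.
  rewrite -(subnK ge) modnDr modn_small;
    by move: ge; rewrite /collapse /collapse_step; repeat case: ifP; lia.
have -> : collapse u + collapse_step u = 4 * k * 1.
  by move: eq_u1; rewrite /collapse /collapse_step; repeat case: ifP; lia.
by rewrite eq_u1 modnn modnMr /collapse /=; case: ifP; lia.
Qed.

Lemma collapse_ordS_edge (u : 'I_(8 * k)) :
  circ_adj (4 * k) [:: 1; 2 * k - 1] (collapse_ord u) (collapse_ord (ordS u)).
Proof.
have succ_u : collapse_ord (ordS u) = (collapse_ord u + collapse_step u) %% (4 * k) :> nat.
  exact: collapse_succ.
rewrite /collapse_step in succ_u; case: ifP succ_u => _ succ_u.
  rewrite circ_adj_sym; apply: (circ_adj_shift (s := 2 * k - 1)).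
  - by rewrite !inE eqxx orbT.
  - by rewrite gtnNdvd //; lia.
  have -> : 2 * k - 1 = 4 * k - (2 * k).+1 by lia.
  by apply: modn_shift_inv succ_u; lia.
apply: (circ_adj_shift (s := 1)) succ_u; first by rewrite inE.
by rewrite gtnNdvd //; lia.
Qed.

Lemma collapse_edge (u v : 'I_(8 * k)) : cycle_adj (8 * k) u v ->
  circ_adj (4 * k) [:: 1; 2 * k - 1] (collapse_ord u) (collapse_ord v).
Proof.
by case/cycle_adjP=> ->; last rewrite circ_adj_sym; apply: collapse_ordS_edge.
Qed.

Lemma collapse_preimage (a : 'I_(4 * k)) s : s \in [:: 1; (2 * k).+1] ->
  exists u, collapse_ord u = a /\ collapse_step u = s.
Proof.
have lt_a := ltn_ord a; rewrite !inE => /orP [] /eqP ->.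
  have lt_u : (if a < 2 * k then a : nat else a + 4 * k) < 8 * k by case: ifP; lia.
  exists (Ordinal lt_u); split; first apply: val_inj;
    by rewrite /= /collapse /collapse_step; repeat case: ifP; lia.
have lt_u : (if odd a then a + 2 * k else if a < 2 * k then a + 4 * k else a) < 8 * k.
  by repeat case: ifP; lia.
exists (Ordinal lt_u); split; first apply: val_inj;
  by rewrite /= /collapse /collapse_step; repeat case: ifP; lia.
Qed.

Lemma collapse_lift_ordS (a b : 'I_(4 * k)) s : s \in [:: 1; (2 * k).+1] ->
  b = (a + s) %% (4 * k) :> nat ->
  exists u, collapse_ord u = a /\ collapse_ord (ordS u) = b.
Proof.
move=> S_s b_as; have [u [cu su]] := collapse_preimage a S_s.
exists u; split=> //; apply: val_inj.
by rewrite /= collapse_succ // su b_as -cu.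
Qed.

Lemma collapse_edge_lift (a b : 'I_(4 * k)) : circ_adj (4 * k) [:: 1; 2 * k - 1] a b ->
  exists u v, [/\ collapse_ord u = a, collapse_ord v = b & cycle_adj (8 * k) u v].
Proof.
have lt1 : 1 < 8 * k by lia.
case/circ_adjP=> s S_s sides.
wlog b_as : a b {sides} / b = (a + s) %% (4 * k) :> nat.
  move=> lift; case: sides => [/lift // | /lift [u [v [cu cv adj_uv]]]].
  by exists v, u; split=> //; rewrite /cycle_adj circ_adj_sym.
move: S_s b_as; rewrite !inE => /orP [] /eqP -> b_as.
  have [u [cu cv]] := collapse_lift_ordS (s := 1) (mem_head _ _) b_as.
  by exists u, (ordS u); split=> //; apply: cycle_adj_ordS.
have a_bs : a = (b + (2 * k).+1) %% (4 * k) :> nat.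
  by rewrite (_ : (2 * k).+1 = 4 * k - (2 * k - 1)); [apply: modn_shift_inv b_as |]; lia.
have S_s : (2 * k).+1 \in [:: 1; (2 * k).+1] by rewrite !inE eqxx orbT.
have [u [cu cv]] := collapse_lift_ordS S_s a_bs.
by exists (ordS u), u; split=> //; rewrite /cycle_adj circ_adj_sym; apply: cycle_adj_ordS.
Qed.

Lemma collapse_eq_cases u u' : u < 8 * k -> u' < 8 * k -> collapse u = collapse u' ->
  u = u' \/ ~~ odd u /\ (u' = u + 4 * k \/ u = u' + 4 * k)
         \/ odd u /\ (u' = u + 2 * k \/ u = u' + 2 * k).
Proof. by rewrite /collapse; repeat case: ifP; lia. Qed.

Lemma collapse_edge_inj (u v u' v' : 'I_(8 * k)) :
  cycle_adj (8 * k) u v -> cycle_adj (8 * k) u' v' ->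
  collapse_ord u = collapse_ord u' -> collapse_ord v = collapse_ord v' -> u = u' /\ v = v'.
Proof.
move=> /cycle_adj_cases adj_uv /cycle_adj_cases adj_uv' /(congr1 val) cu /(congr1 val) cv.
have := collapse_eq_cases (ltn_ord u) (ltn_ord u') cu.
have := collapse_eq_cases (ltn_ord v) (ltn_ord v') cv.
have := ltn_ord u; have := ltn_ord v; have := ltn_ord u'; have := ltn_ord v'.
by split; apply: ord_inj; lia.
Qed.

Lemma blockA_fibre i : i < 2 * k ->
  [set v : 'I_(8 * k) | (val v == 2 * i) || (val v == 4 * k + 2 * i)]
  = [set v : 'I_(8 * k) | collapse (2 * i) == collapse v].
Proof.
move=> lt_i; apply/setP => v; rewrite !inE /=.
by have := ltn_ord v; rewrite /collapse; repeat case: ifP; lia.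
Qed.

Lemma blockB_fibre j : (j < k) || (2 * k <= j < 3 * k) ->
  [set v : 'I_(8 * k) | (val v == 2 * j + 1) || (val v == 2 * k + 2 * j + 1)]
  = [set v : 'I_(8 * k) | collapse (2 * j + 1) == collapse v].
Proof.
move=> range_j; apply/setP => v; rewrite !inE /=.
by have := ltn_ord v; rewrite /collapse; repeat case: ifP; lia.
Qed.

Lemma collapse_block_index x : x < 8 * k ->
  (exists2 i, i < 2 * k & collapse x = collapse (2 * i)) \/
  (exists2 j, (j < k) || (2 * k <= j < 3 * k) & collapse x = collapse (2 * j + 1)).
Proof.
move=> /collapse_lt; move: (collapse x) => a lt_a.
have [odd_a | even_a] := boolP (odd a); [right | left].
  have [lt_a2 | ge_a2] := ltnP a (2 * k).
    by exists a./2; rewrite /collapse; repeat case: ifP; lia.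
  by exists (a + 2 * k)./2; rewrite /collapse; repeat case: ifP; lia.
by exists a./2; rewrite /collapse; repeat case: ifP; lia.
Qed.

Lemma blocks_preim_partition :
  blocksA k :|: blocksB k = preim_partition collapse_ord [set: 'I_(8 * k)].
Proof.
have fibreE (x : 'I_(8 * k)) :
    [set y in [set: 'I_(8 * k)] | collapse_ord x == collapse_ord y]
    = [set y : 'I_(8 * k) | collapse x == collapse y].
  by apply/setP => y; rewrite !inE.
apply/setP => X; apply/idP/imsetP.
  rewrite !inE => /orP [] /existsP [i].
    move=> /eqP ->; have lt_i : 2 * i < 8 * k by have := ltn_ord i; lia.
    by exists (Ordinal lt_i); rewrite // fibreE blockA_fibre.
  case/andP=> range_i /eqP ->; have lt_i : 2 * i + 1 < 8 * k by have := ltn_ord i; lia.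
  by exists (Ordinal lt_i); rewrite // fibreE blockB_fibre //; have := ltn_ord i; lia.
case=> x _ ->; rewrite fibreE !inE.
case: (collapse_block_index (ltn_ord x)) => [[i lt_i ->] | [j range_j ->]].
  by apply/orP; left; apply/existsP; exists (Ordinal lt_i); rewrite blockA_fibre.
have lt_j : j < 3 * k by lia.
apply/orP; right; apply/existsP; exists (Ordinal lt_j); rewrite /= blockB_fibre //.
by rewrite eqxx andbT; lia.
Qed.

End Collapse.

Theorem mainTheorem11 (k : nat) (hk : 2 <= k) :
  let P := blocksA k :|: blocksB k in
  (* the blocks are pairwise disjoint sets of pairwise nonadjacent vertices *)
  [/\ trivIset P,
      (forall X, X \in P -> forall u v, u \in X -> v \in X -> ~~ cycle_adj (8 * k) u v),
      (* identification creates no parallel edges (the quotient is simple) *)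
      (forall u v u' v' : 'I_(8 * k), cycle_adj (8 * k) u v -> cycle_adj (8 * k) u' v' ->
         ident_class P u = ident_class P u' ->
         ident_class P v = ident_class P v' -> u = u' /\ v = v') &
      (* and the identified graph G_{4k}(A,B) is isomorphic to C_{4k}(1,2k-1) *)
      iso_onto (ident_vertices P) (ident_adj (cycle_adj (8 * k)))
        (circ_adj (4 * k) [:: 1; 2 * k - 1])].
Proof.
rewrite /= blocks_preim_partition //.
have circ_irr : irreflexive (circ_adj (4 * k) [:: 1; 2 * k - 1]).
  by move=> a; rewrite /circ_adj eqxx.
have lt0 : 0 < 8 * k by lia.
split.
- by case/and3P: (preim_partitionP (@collapse_ord k) [set: 'I_(8 * k)]).
- exact: preim_partition_independent circ_irr (collapse_edge hk).
- move=> u v u' v' adj_uv adj_uv' /eqP + /eqP.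
  rewrite !ident_class_preim_eq => /eqP eq_u /eqP eq_v.
  exact: collapse_edge_inj adj_uv adj_uv' eq_u eq_v.
apply: iso_onto_preim_partition circ_irr (collapse_edge hk) _ (collapse_edge_lift hk) (Ordinal lt0).
by move=> a; have [u [cu _]] := collapse_preimage hk a (mem_head 1 _); exists u.
Qed.
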